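(* Let $f:F\to F'$ be a morphism of hyperfields. Let $F_1,F_2$ be topological hyperfields whose underlying hyperfield is $F$, such that for each $a\in F'$ the identity map $F_1\to F_2$ restricts to a homeomorphism $f^{-1}(a)\to f^{-1}(a)$, each preimage carrying its subspace topology. Let $*\in\{s,w\}$ and $M\in\operatorname{Gr}^*(r,F'^n)$. Then the identity map $\operatorname{Real}^*_{F_1}(M)\to\operatorname{Real}^*_{F_2}(M)$ is a homeomorphism.
   Context: Hyperfields. A hyperfield $(F,\odot,\boxplus,1,0)$ has the following data and axioms. - $\odot$ is a commutative multiplication and $\boxplus$ is a hyperaddition assigning to each $x,y$ a nonempty subset $x\boxplus y\subseteq F$ (extended to subsets by unions). - $\boxplus$ is commutative and associative, and $x\boxplus 0=\{x\}$. - Each $x$ has a unique $-x$ with $0\in x\boxplus(-x)$, and $x\in y\boxplus z \iff z\in x\boxplus(-y)$. - $(F\setminus\{0\},\odot,1)$ is an abelian group $F^\times$, $0\odot x=0$, and $x\odot(y\boxplus z)=(x\odot y)\boxplus(x\odot z)$. A homomorphism (morphism) $h$ satisfies $h(0)=0$, $h(1)=1$, $h(xy)=h(x)h(y)$ and $h(x\boxplus y)\subseteq h(x)\boxplus h(y)$. A topological hyperfield is a hyperfield with a topology in which $F\setminus\{0\}$ is open, multiplication is continuous, and inversion on $F^\times$ is continuous. Grassmannians. A strong Grassmann–Plücker (GP) function of rank $r$ on $E=\{1,\dots,n\}$ is a function $\varphi:E^r\to F$ with the following properties. - $\varphi$ is not identically $0$. - $\varphi$ is alternating. - For all $(i_1,\dots,i_{r+1})\in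 E^{r+1}$ and $(j_1,\dots,j_{r-1})\in E^{r-1}$: $$0\in\boxplus_{k=1}^{r+1}(-1)^k\varphi(i_1,\dots,\widehat{i_k},\dots,i_{r+1})\odot\varphi(i_k,j_1,\dots,j_{r-1}).$$ A weak GP function is a function $\varphi:E^r\to F$ with the following properties. - $\varphi$ is nonzero and alternating. - Its support $\{\{i_1,\dots,i_r\}:\varphi(i_1,\dots,i_r)\ne0\}$ is the set of bases of a matroid. - The relation holds whenever $|\{i\}\setminus\{j\}|=3$. $\operatorname{Gr}^s(r,F^n)$ and $\operatorname{Gr}^w(r,F^n)$ are the sets of classes of strong, resp. weak, GP functions modulo $\varphi\sim\alpha\varphi$, $\alpha\in F^\times$. For topological $F$ they have the subspace topology of $(F^{E^r}\setminus\{0\})/F^\times$, which carries the product and quotient topologies. Realization spaces. A morphism $f$ induces $\operatorname{Gr}^*(f):[\varphi]\mapsto[f\circ\varphi]$. For $M\in\operatorname{Gr}^*(r,F'^n)$, the realization space $\operatorname{Real}^*_F(M)$ is the preimage $\operatorname{Gr}^*(f)^{-1}(M)\subseteq\operatorname{Gr}^*(r,F^n)$ with the subspace topology. The notation $\operatorname{Real}^*_{F_i}(M)$ indicates which topology on $F$ is used. *)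

From HB Require Import structures.
From mathcomp Require Import all_boot.
Set Implicit Arguments. Unset Strict Implicit. Unset Printing Implicit Defensive.

(* Hyperfields.  [hadd x y z] means  z \in x [+] y.                    *)
Record hyperfield := HyperField {
  hcar :> Type;
  hmul : hcar -> hcar -> hcar;
  hadd : hcar -> hcar -> hcar -> Prop;
  hone : hcar;
  hzero : hcar;
  hneg : hcar -> hcar;
  hinv : hcar -> hcar;
  hadd_ne : forall x y, exists z, hadd x y z;
  haddC : forall x y z, hadd x y z <-> hadd y x z;
  haddA : forall x y z w,
      (exists u, hadd x y u /\ hadd u z w) <-> (exists u, hadd y z u /\ hadd x u w);
  hadd0 : forall x z, hadd x hzero z <-> z = x;
  hnegP : forall x, hadd x (hneg x) hzero;
  hneg_uniq : forall x y, hadd x y hzero -> y = hneg x;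
  hrev : forall x y z, hadd y z x <-> hadd x (hneg y) z;
  hmulC : forall x y, hmul x y = hmul y x;
  hmulA : forall x y z, hmul x (hmul y z) = hmul (hmul x y) z;
  hmul1 : forall x, hmul hone x = x;
  hone_neq0 : hone <> hzero;
  hmul_neq0 : forall x y, x <> hzero -> y <> hzero -> hmul x y <> hzero;
  hmulV : forall x, x <> hzero -> hmul x (hinv x) = hone;
  hmul0 : forall x, hmul hzero x = hzero;
  hdistr : forall x y z w, hadd (hmul x y) (hmul x z) w <-> exists u, hadd y z u /\ w = hmul x u
}.
Arguments hone {h}. Arguments hzero {h}.

Record hmorph (F F' : hyperfield) := HMorph {
  hm :> F -> F';
  hm0 : hm hzero = hzero;
  hm1 : hm hone = hone;
  hmM : forall x y, hm (hmul x y) = hmul (hm x) (hm y);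
  hmA : forall x y z, hadd x y z -> hadd (hm x) (hm y) (hm z)
}.

Definition opens (X : Type) := (X -> Prop) -> Prop.

Definition is_topology X (T : opens X) :=
  T (fun _ => True) /\
  (forall U V, T U -> T V -> T (fun x => U x /\ V x)) /\
  (forall (I : Type) (U : I -> X -> Prop), (forall i, T (U i)) -> T (fun x => exists i, U i x)).

Definition continuous X Y (TX : opens X) (TY : opens Y) (f : X -> Y) :=
  forall V, TY V -> TX (fun x => V (f x)).

Definition homeomorphism X Y (TX : opens X) (TY : opens Y) (f : X -> Y) :=
  exists g : Y -> X, cancel f g /\ cancel g f /\ continuous TX TY f /\ continuous TY TX g.

Definition sub_top X (T : opens X) (S : X -> Prop) : opens {x : X | S x} :=
  fun U => exists V, T V /\ forall x : {x : X | S x}, U x <-> V (proj1_sig x).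
Arguments sub_top {X} T S.

Definition prod_top X Y (TX : opens X) (TY : opens Y) : opens (X * Y) :=
  fun U => forall p, U p -> exists V W, TX V /\ TY W /\ V p.1 /\ W p.2 /\
      forall q, V q.1 -> W q.2 -> U q.

Fixpoint inL T (x : T) (l : seq T) : Prop :=
  match l with [::] => False | y :: l' => y = x \/ inL x l' end.

(* product topology on I -> A (basic opens: finitely many coordinates constrained) *)
Definition prod_fun_top (I A : Type) (T : opens A) : opens (I -> A) :=
  fun U => forall f, U f -> exists (l : seq I) (V : I -> A -> Prop),
      (forall i, T (V i)) /\ (forall i, inL i l -> V i (f i)) /\
      (forall g, (forall i, inL i l -> V i (g i)) -> U g).
Arguments prod_fun_top I {A} T.

Lemma hinv_neq0 (F : hyperfield) (x : F) : x <> hzero -> hinv x <> hzero.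
Proof.
move=> Hx H; have := hmulV Hx; rewrite H hmulC hmul0 => E.
by apply: (@hone_neq0 F); rewrite E.
Qed.

Definition hinv_nz (F : hyperfield) (x : {x : F | x <> hzero}) : {x : F | x <> hzero} :=
  exist _ (hinv (proj1_sig x)) (hinv_neq0 (proj2_sig x)).

Definition top_hyperfield (F : hyperfield) (T : opens F) :=
  is_topology T /\
  T (fun x : F => x <> hzero) /\
  continuous (prod_top T T) T (fun p => hmul p.1 p.2) /\
  continuous (sub_top T (fun x : F => x <> hzero)) (sub_top T (fun x : F => x <> hzero)) (@hinv_nz F).

(* Grassmann-Pluecker functions on E = 'I_n; E^r = 'I_r -> 'I_n.       *)

Definition swapt n r (i : 'I_r -> 'I_n) (a b : 'I_r) : 'I_r -> 'I_n :=
  fun t => if t == a then i b else if t == b then i a else i t.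

Definition alternating (F : hyperfield) n r (phi : ('I_r -> 'I_n) -> F) :=
  (forall i, ~ injective i -> phi i = hzero) /\
  (forall i (a b : 'I_r), a != b -> phi (swapt i a b) = hneg (phi i)).

Fixpoint hsum (F : hyperfield) (l : seq F) (z : F) : Prop :=
  match l with
  | [::] => z = hzero
  | a :: l' => exists y, hsum l' y /\ hadd a y z
  end.

Definition signpow (F : hyperfield) (k : nat) : F := iter k (hmul (hneg hone)) hone.

Lemma lt_pred_aux (r k : nat) : k.+1 < r -> k < r.-1.
Proof. by case: r. Qed.

(* (a, j_1, ..., j_{r-1}) as an element of E^r *)
Definition consr n r (a : 'I_n) (j : 'I_r.-1 -> 'I_n) : 'I_r -> 'I_n :=
  fun t => (match nat_of_ord t as m return m < r -> 'I_n with
            | 0 => fun _ => a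
            | k.+1 => fun H => j (Ordinal (lt_pred_aux H))
            end) (ltn_ord t).

(* the terms (-1)^k phi(i_1..^i_k..i_{r+1}) phi(i_k, j_1..j_{r-1}), k = 1..r+1 *)
Definition GP_terms (F : hyperfield) n r (phi : ('I_r -> 'I_n) -> F)
    (i : 'I_r.+1 -> 'I_n) (j : 'I_r.-1 -> 'I_n) : seq F :=
  [seq hmul (hmul (signpow F (nat_of_ord k).+1) (phi (fun t : 'I_r => i (lift k t))))
            (phi (consr (i k) j)) | k : 'I_r.+1 <- enum 'I_r.+1].

Definition GP_rel (F : hyperfield) n r (phi : ('I_r -> 'I_n) -> F) i j :=
  hsum (GP_terms phi i j) hzero.

Definition strongGP (F : hyperfield) n r (phi : ('I_r -> 'I_n) -> F) :=
  (exists i, phi i <> hzero) /\ alternating phi /\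
  (forall i j, 0 < r -> GP_rel phi i j).

Definition matroid_bases n (B : {set 'I_n} -> Prop) :=
  (exists b, B b) /\
  forall B1 B2, B B1 -> B B2 -> forall x, x \in B1 :\: B2 ->
    exists y, y \in B2 :\: B1 /\ B (y |: (B1 :\ x)).

Definition support (F : hyperfield) n r (phi : ('I_r -> 'I_n) -> F) : {set 'I_n} -> Prop :=
  fun B => exists i, phi i <> hzero /\ B = [set i t | t : 'I_r].

Definition weakGP (F : hyperfield) n r (phi : ('I_r -> 'I_n) -> F) :=
  (exists i, phi i <> hzero) /\ alternating phi /\
  matroid_bases (support phi) /\
  (forall i j, 0 < r ->
     #|[set i t | t : 'I_r.+1] :\: [set j t | t : 'I_r.-1]| = 3 -> GP_rel phi i j).

Inductive gr_kind := Strong | Weak.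

Definition GP (k : gr_kind) (F : hyperfield) n r (phi : ('I_r -> 'I_n) -> F) :=
  match k with Strong => strongGP phi | Weak => weakGP phi end.

(* (F^{E^r} \ {0}) / F^x and the Grassmannians as sets of classes.     *)

Definition nonzero_fun (F : hyperfield) n r (phi : ('I_r -> 'I_n) -> F) :=
  exists i, phi i <> hzero.

Definition nzfun (F : hyperfield) n r := {phi : ('I_r -> 'I_n) -> F | nonzero_fun phi}.

Definition cls (F : hyperfield) n r (phi : ('I_r -> 'I_n) -> F) : (('I_r -> 'I_n) -> F) -> Prop :=
  fun psi => exists a : F, a <> hzero /\ psi = (fun i => hmul a (phi i)).

Definition projQ_space (F : hyperfield) n r :=
  {c : (('I_r -> 'I_n) -> F) -> Prop | exists phi : nzfun F n r, c = cls (proj1_sig phi)}.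

Definition projQ (F : hyperfield) n r (phi : nzfun F n r) : projQ_space F n r :=
  exist _ (cls (proj1_sig phi)) (ex_intro _ phi erefl).

Definition quot_top (F : hyperfield) n r (T : opens F) : opens (projQ_space F n r) :=
  fun U => sub_top (prod_fun_top ('I_r -> 'I_n) T) (@nonzero_fun F n r)
                   (fun x => U (@projQ F n r x)).
Arguments quot_top {F} n r T.

Definition in_Gr (k : gr_kind) (F : hyperfield) n r (c : projQ_space F n r) :=
  exists phi, proj1_sig c phi /\ GP k phi.

Definition Gr (k : gr_kind) (F : hyperfield) n r := {c : projQ_space F n r | in_Gr k c}.

Definition Gr_top (k : gr_kind) (F : hyperfield) n r (T : opens F) : opens (Gr k F n r) :=
  sub_top (quot_top n r T) (@in_Gr k F n r).
Arguments Gr_top k {F} n r T.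

(* c lies in Gr(f)^{-1}(M), i.e. [f o phi] = M for phi in c *)
Definition in_Real (k : gr_kind) (F F' : hyperfield) (f : hmorph F F') n r
    (M : Gr k F' n r) (c : Gr k F n r) :=
  exists phi, proj1_sig (proj1_sig c) phi /\ proj1_sig (proj1_sig M) (fun i => f (phi i)).

Definition Real (k : gr_kind) (F F' : hyperfield) (f : hmorph F F') n r (M : Gr k F' n r) :=
  {c : Gr k F n r | in_Real f M c}.

Definition Real_top (k : gr_kind) (F F' : hyperfield) (T : opens F) (f : hmorph F F') n r
    (M : Gr k F' n r) : opens (Real f M) :=
  sub_top (Gr_top k n r T) (in_Real f M).
Arguments Real_top {k F F'} T f {n r} M.

From HB Require Import structures.
From mathcomp Require Import all_boot.
From Stdlib Require Import FunctionalExtensionality PropExtensionality.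
From Stdlib Require Import IndefiniteDescription ProofIrrelevance Classical.
Set Implicit Arguments. Unset Strict Implicit. Unset Printing Implicit Defensive.

(* An open set of realizations comes from a scaling-invariant open set [O] of
   Grassmann-Pluecker functions.  If [phi] represents a realization and
   [phi i0 <> 0], any other representative [h] satisfies [f o h = a (f o phi)],
   so rescaling [h] by [phi i0 / h i0], a [T1]-continuous operation near [phi],
   moves every coordinate [h i] into the fibre of [f] through [phi i].  On these
   fibres [T1] and [T2] agree, so a [T2]-open [O] containing [phi] contains the
   rescaled [h] as soon as [h] is [T1]-close to [phi]: [T2]-open sets of
   realizations are [T1]-open, and symmetrically. *)

Lemma open_ext X (T : opens X) (U U' : X -> Prop) :
  T U -> (forall x, U x <-> U' x) -> T U'.
Proof.
move=> TU E; suff -> : U' = U by [].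
by apply: functional_extensionality => x; apply: propositional_extensionality; split; apply E.
Qed.

Lemma homeomorphism_id_continuous X (TX TY : opens X) :
  homeomorphism TX TY id -> continuous TX TY id /\ continuous TY TX id.
Proof.
case=> g [_ [gK [cont_id cont_g]]]; split => //.
by have <- : g = id by apply: functional_extensionality => x; apply: gK.
Qed.

Definition in_box I A (l : seq I) (V : I -> A -> Prop) (g : I -> A) :=
  forall i, inL i l -> V i (g i).

Section TopologicalHyperfield.
Variables (F : hyperfield) (T : opens F).
Hypothesis HT : top_hyperfield T.

Lemma open_setT : T (fun _ => True).
Proof. by case: HT => [[]]. Qed.

Lemma open_setI U V : T U -> T V -> T (fun x => U x /\ V x).
Proof. by case: HT => [[_ [inter _]] _]; apply: inter. Qed.

Lemma open_nonzero : T (fun x : F => x <> hzero).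
Proof. by case: HT => [_ []]. Qed.

Lemma open_box_inter I (l : seq I) (V : I -> F -> Prop) :
  (forall i, T (V i)) -> T (fun x => forall i, inL i l -> V i x).
Proof.
move=> TV; elim: l => [|j l IHl].
  by apply: (open_ext open_setT) => x; split => // _ i [].
apply: (open_ext (open_setI (TV j) IHl)) => x; split.
  by case=> Vj Vl i /= [<-|/Vl].
by move=> Vx; split=> [|i il]; apply: Vx; [left | right].
Qed.

Lemma hmul_nbhd V a b : T V -> V (hmul a b) ->
  exists A B, T A /\ T B /\ A a /\ B b /\ forall x y, A x -> B y -> V (hmul x y).
Proof.
case: HT => [_ [_ [cont_mul _]]] TV Vab.
have [A [B [TA [TB [Aa [Bb AB_V]]]]]] := cont_mul V TV (a, b) Vab.
by exists A, B; do 4 split => //; move=> x y Ax By; apply: (AB_V (x, y)).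
Qed.

Lemma open_scale a V : T V -> T (fun x => V (hmul a x)).
Proof.
case: HT => [[_ [_ open_union]] _] TV.
pose I := {G : F -> Prop | T G /\ forall y, G y -> V (hmul a y)}.
apply: (open_ext (open_union I (@sval _ _) (fun G => proj1 (svalP G)))) => x; split.
  by case=> [[G [_ GV]] /= Gx]; apply: GV.
move=> Vax; have [A [B [_ [TB [Aa [Bx AB_V]]]]]] := hmul_nbhd TV Vax.
by exists (exist _ B (conj TB (fun y By => AB_V a y Aa By))).
Qed.

Lemma hinv_nbhd V a : T V -> a <> hzero -> V (hinv a) ->
  exists G, T G /\ G a /\ forall x, x <> hzero -> G x -> V (hinv x).
Proof.
case: HT => [_ [_ [_ cont_inv]]] TV a_nz Va.
have [|G [TG GV]] := cont_inv (fun x => V (sval x)); first by exists V.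
exists G; do 2 split => //; first by apply/(GV (exist _ a a_nz)).
by move=> x x_nz Gx; apply/(GV (exist _ x x_nz)).
Qed.

Lemma normalize_nbhd W p q : T W -> W q -> p <> hzero ->
  exists G B, T G /\ T B /\ G p /\ B q /\
    forall x y, x <> hzero -> G x -> B y -> W (hmul (hmul p (hinv x)) y).
Proof.
move=> TW Wq p_nz.
have : W (hmul (hmul p (hinv p)) q) by rewrite hmulV // hmul1.
case/(hmul_nbhd TW) => [A [B [TA [TB [Ap [Bq AB_W]]]]]].
have [G [TG [Gp G_A]]] := hinv_nbhd (open_scale p TA) p_nz Ap.
exists G, B; do 4 split => //.
by move=> x y x_nz Gx By; apply: AB_W => //; apply: G_A.
Qed.

Lemma prod_open_rescale I (O : (I -> F) -> Prop) : prod_fun_top I T O ->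
  prod_fun_top I T (fun g => exists b, b <> hzero /\ O (fun i => hmul b (g i))).
Proof.
move=> TO g [b [b_nz Obg]]; have [l [V [TV [Vbg V_O]]]] := TO _ Obg.
exists l, (fun i x => V i (hmul b x)); split; first by move=> i; apply: open_scale.
by split=> // h Vbh; exists b; split=> //; apply: V_O.
Qed.

End TopologicalHyperfield.

Lemma hm_neq0 (F F' : hyperfield) (f : hmorph F F') x : x <> hzero -> f x <> hzero.
Proof.
move=> x_nz fx0; apply: (@hone_neq0 F').
by rewrite -(hm1 f) -(hmulV x_nz) hmM fx0 hmul0.
Qed.

Lemma hm_normalize (F F' : hyperfield) (f : hmorph F F') I (phi h : I -> F) a i0 :
  (forall i, f (h i) = hmul a (f (phi i))) -> h i0 <> hzero ->
  forall i, f (hmul (hmul (phi i0) (hinv (h i0))) (h i)) = f (phi i).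
Proof.
move=> fh hi0_nz i.
have inv_hi0 : hmul (hmul a (f (phi i0))) (f (hinv (h i0))) = hone.
  by rewrite -fh -hmM hmulV // hm1.
rewrite !hmM fh -[RHS]hmul1 -inv_hi0.
set p := f (phi i0); set q := f (phi i); set u := f (hinv (h i0)).
by rewrite (hmulC a p) -!hmulA; congr (hmul p); rewrite !hmulA (hmulC u a).
Qed.

Section Classes.
Variables (F : hyperfield) (n r : nat).
Implicit Types (g h k : ('I_r -> 'I_n) -> F) (c : projQ_space F n r).

Lemma cls_scale g b : b <> hzero -> cls g (fun i => hmul b (g i)).
Proof. by exists b. Qed.

Lemma cls_trans g h k : cls g h -> cls h k -> cls g k.
Proof.
case=> [a [a_nz ->]] [b [b_nz ->]]; exists (hmul b a); split; first exact: hmul_neq0.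
by apply: functional_extensionality => i; rewrite hmulA.
Qed.

Lemma cls_sym g h : cls g h -> cls h g.
Proof.
case=> [a [a_nz ->]]; exists (hinv a); split; first exact: hinv_neq0.
apply: functional_extensionality => i.
by rewrite hmulA (hmulC (hinv a)) hmulV // hmul1.
Qed.

Lemma cls_nonzero g h : nonzero_fun g -> cls g h -> nonzero_fun h.
Proof. by case=> i gi_nz [a [a_nz ->]]; exists i; apply: hmul_neq0. Qed.

Lemma cls_hm F' (f : hmorph F F') g h :
  cls g h -> cls (fun i => f (g i)) (fun i => f (h i)).
Proof.
case=> [a [a_nz ->]]; exists (f a); split; first exact: hm_neq0.
by apply: functional_extensionality => i; rewrite hmM.
Qed.

Lemma class_cls c g h : sval c g -> sval c h -> cls g h.
Proof.
by case: c => c [phi Ec] /=; rewrite Ec => /cls_sym phi_g; apply: cls_trans.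
Qed.

Lemma class_closed c g h : sval c g -> cls g h -> sval c h.
Proof. by case: c => c [phi Ec] /=; rewrite Ec; apply: cls_trans. Qed.

Lemma class_nonzero c g : sval c g -> nonzero_fun g.
Proof. by case: c => c [[phi phi_nz] Ec] /=; rewrite Ec; apply: cls_nonzero. Qed.

Lemma class_projQ c g (g_nz : nonzero_fun g) : sval c g -> c = projQ (exist _ g g_nz).
Proof.
move=> cg; apply: eq_sig_hprop => [? ? ?|]; first exact: proof_irrelevance.
apply: functional_extensionality => h; apply: propositional_extensionality.
by split => [/(class_cls cg) | /(class_closed cg)].
Qed.

End Classes.

Notation Real_rep c := (sval (sval (sval c))).

Section Realizations.
Variables (k : gr_kind) (F F' : hyperfield) (f : hmorph F F') (n r : nat).
Variable M : Gr k F' n r.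

Lemma Real_rep_image (c : Real f M) phi :
  Real_rep c phi -> sval (sval M) (fun i => f (phi i)).
Proof.
move=> c_phi; have [psi [c_psi M_fpsi]] := svalP c.
by apply: class_closed M_fpsi _; apply: cls_hm; apply: class_cls c_psi c_phi.
Qed.

Lemma Real_reps_proportional (c c' : Real f M) phi h :
  Real_rep c phi -> Real_rep c' h -> exists a, forall i, f (h i) = hmul a (f (phi i)).
Proof.
move=> /Real_rep_image M_fphi /Real_rep_image M_fh.
by have [a [_ fh]] := class_cls M_fphi M_fh; exists a => i; apply: (equal_f fh i).
Qed.

Lemma Real_rep_scale (c : Real f M) phi b :
  Real_rep c phi -> b <> hzero -> Real_rep c (fun i => hmul b (phi i)).
Proof. by move=> c_phi b_nz; apply: class_closed c_phi (cls_scale _ b_nz). Qed.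

Lemma Real_top_open_reps T U : Real_top T f M U ->
  exists O, prod_fun_top _ T O /\ forall c phi, Real_rep c phi -> (U c <-> O phi).
Proof.
case=> V [[W [[O [TO W_O]] V_W]] U_V].
exists O; split => // c phi c_phi.
rewrite U_V V_W (class_projQ (class_nonzero c_phi) c_phi).
exact: (W_O (exist _ phi _)).
Qed.

Lemma Real_top_open_of_reps T U : top_hyperfield T ->
  (exists O, prod_fun_top _ T O /\ forall c phi, Real_rep c phi -> (U c <-> O phi)) ->
  Real_top T f M U.
Proof.
move=> HT [O [TO U_O]].
pose W (x : projQ_space F n r) := exists phi, sval x phi /\ O phi.
exists (fun c : Gr k F n r => W (sval c)); split; last first.
  move=> c; split => [Uc | [phi [c_phi Ophi]]]; last exact/(U_O c phi c_phi).
  have [phi [c_phi _]] := svalP c.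
  by exists phi; split => //; apply/(U_O c phi c_phi).
exists W; split => //.
exists (fun g => exists b, b <> hzero /\ O (fun i => hmul b (g i))).
split; first exact: prod_open_rescale.
move=> [g g_nz] /=; split.
  by case=> phi [[b [b_nz ->]] Ophi]; exists b.
by case=> b [b_nz Obg]; exists (fun i => hmul b (g i)); split => //; apply: cls_scale.
Qed.

End Realizations.

Section FibrewiseComparison.
Variables (F F' : hyperfield) (f : hmorph F F') (T1 T2 : opens F).
Hypothesis HT1 : top_hyperfield T1.
Hypothesis fibre_cont : forall a : F',
  continuous (sub_top T1 (fun x => f x = a)) (sub_top T2 (fun x => f x = a)) id.

Lemma fibre_open V a : T2 V -> exists V', T1 V' /\ forall y, f y = a -> (V y <-> V' y).
Proof.
move=> TV; have [|G [TG GV]] := @fibre_cont a (fun x => V (sval x)); first by exists V.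
by exists G; split => // y fy; apply: (GV (exist _ y fy)).
Qed.

Lemma fibre_normalize_nbhd V p q : T2 V -> V q -> p <> hzero ->
  exists G B, T1 G /\ T1 B /\ G p /\ B q /\ forall x y, x <> hzero -> G x -> B y ->
    f (hmul (hmul p (hinv x)) y) = f q -> V (hmul (hmul p (hinv x)) y).
Proof.
move=> TV Vq p_nz; have [V1 [TV1 V_V1]] := fibre_open (f q) TV.
have [G [B [TG [TB [Gp [Bq GB_V1]]]]]] :=
  normalize_nbhd HT1 TV1 (proj1 (V_V1 q erefl) Vq) p_nz.
exists G, B; do 4 split => //.
by move=> x y x_nz Gx By fxy; apply/(V_V1 _ fxy); apply: GB_V1.
Qed.

Lemma rescaled_box I (O : (I -> F) -> Prop) phi i0 :
  prod_fun_top I T2 O -> O phi -> phi i0 <> hzero ->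
  exists l V, (forall i, T1 (V i)) /\ in_box l V phi /\
    forall h a, (forall i, f (h i) = hmul a (f (phi i))) -> in_box l V h ->
      exists b, b <> hzero /\ O (fun i => hmul b (h i)).
Proof.
move=> TO Ophi phi0_nz; have [l [V [TV [Vphi V_O]]]] := TO _ Ophi.
have GB_ex i : exists GBi : (F -> Prop) * (F -> Prop),
    [/\ T1 GBi.1, T1 GBi.2, GBi.1 (phi i0), GBi.2 (phi i) &
      inL i l -> forall x y, x <> hzero -> GBi.1 x -> GBi.2 y ->
        f (hmul (hmul (phi i0) (hinv x)) y) = f (phi i) ->
        V i (hmul (hmul (phi i0) (hinv x)) y)].
  have [il | nil] := classic (inL i l).
    have [G [B [TG [TB [Gp [Bq GB_V]]]]]] :=
      fibre_normalize_nbhd (TV i) (Vphi i il) phi0_nz.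
    by exists (G, B).
  by exists (fun _ => True, fun _ => True); split => //; apply: open_setT.
have [GB GB_spec] := functional_choice _ GB_ex.
pose G x := x <> hzero /\ forall i, inL i l -> (GB i).1 x.
have TG : T1 G.
  apply: (open_setI HT1 (open_nonzero HT1)); apply: open_box_inter => // i.
  by case: (GB_spec i).
pose W i x := (GB i).2 x /\ (i = i0 -> G x).
exists (i0 :: l), W; split; [|split].
- move=> i; have [-> | ne] := classic (i = i0).
    case: (GB_spec i0) => _ TB _ _ _.
    by apply: (open_ext (open_setI HT1 TB TG)) => x; split=> [[Bx Gx] | [Bx /(_ erefl)]].
  case: (GB_spec i) => _ TB _ _ _.
  by apply: (open_ext TB) => x; rewrite /W; split=> [Bx | [] //]; split=> // /ne [].
- move=> i _; split; first by case: (GB_spec i).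
  by move=> ->; split=> // j _; case: (GB_spec j).
- move=> h a fh h_box.
  have [h0_nz Gh0] : G (h i0) by apply: (h_box i0 (or_introl erefl)).2.
  exists (hmul (phi i0) (hinv (h i0))); split.
    by apply: hmul_neq0 => //; apply: hinv_neq0.
  apply: V_O => i il; case: (GB_spec i) => _ _ _ _; apply=> //.
  + exact: Gh0.
  + by case: (h_box i (or_intror il)).
  + exact: hm_normalize fh h0_nz i.
Qed.

Lemma Real_top_id_continuous k n r (M : Gr k F' n r) :
  continuous (Real_top T1 f M) (Real_top T2 f M) id.
Proof.
move=> U /Real_top_open_reps [O [TO U_O]]; apply: Real_top_open_of_reps => //.
pose O1 g := exists l V, (forall i, T1 (V i)) /\ in_box l V g /\
  forall (c : Real f M) h, Real_rep c h -> in_box l V h -> U c.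
exists O1; split.
  move=> g [l [V [TV [Vg V_U]]]]; exists l, V; split=> //; split=> // h Vh.
  by exists l, V.
move=> c phi c_phi; split => [Uc | [l [V [_ [Vphi V_U]]]]]; last exact: V_U c_phi Vphi.
have [i0 phi0_nz] := class_nonzero c_phi.
have [l [V [TV [Vphi V_O]]]] := rescaled_box TO (proj1 (U_O _ _ c_phi) Uc) phi0_nz.
exists l, V; split=> //; split=> // c' h c'_h Vh.
have [a fh] := Real_reps_proportional c_phi c'_h.
have [b [b_nz Obh]] := V_O h a fh Vh.
exact/(U_O c' _ (Real_rep_scale c'_h b_nz)).
Qed.

End FibrewiseComparison.

Theorem lemma5p1 (F F' : hyperfield) (f : hmorph F F') (T1 T2 : opens F) :
  top_hyperfield T1 -> top_hyperfield T2 ->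
  (forall a : F', homeomorphism (sub_top T1 (fun x => f x = a))
                                (sub_top T2 (fun x => f x = a)) id) ->
  forall (k : gr_kind) (r n : nat) (M : Gr k F' n r),
    homeomorphism (Real_top T1 f M) (Real_top T2 f M) id.
Proof.
move=> HT1 HT2 fibre_homeo k r n M.
have fibre_cont a := homeomorphism_id_continuous (fibre_homeo a).
exists id; do 2 split => //; split; apply: Real_top_id_continuous => // a.
- exact: (fibre_cont a).1.
- exact: (fibre_cont a).2.
Qed.
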